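(* Let $F$ be a sensori-computational device and $N\subseteq Y(F)$ such that every nonempty string $s_1s_2\cdots s_k\in\mathcal{L}(F)$ has $s_1\in Y(F)\setminus N$. Then there exists a sensori-computational device that output simulates $F$ modulo the $N$-pump $P_N$ if and only if there exists a sensori-computational device that output simulates $F$ modulo the $N$-shrink $\pi_N$ (both taken with $L=\mathcal{L}(F)$, $\Sigma=Y(F)$).
   Context: A sensori-computational device is a 6-tuple $F=(V,V_0,Y,\tau,C,c)$ where $V$ is a non-empty finite set of states, $V_0\subseteq V$ a non-empty set of initial states, $Y=Y(F)$ a finite set of observations, $\tau:V\times V\to\mathcal{P}(Y)$, $C$ a set of outputs, $c:V\to\mathcal{P}(C)\setminus\{\emptyset\}$. A string $y_1\cdots y_n$ reaches $w$ from $v$ if there are states $w_0=v,\dots,w_n=w$ with $y_i\in\tau(w_{i-1},w_i)$; $\mathcal{R}_F(s)$ is the set of states reached by $s$ from some initial state; $\mathcal{L}(F)=\{s\in Y^*:\mathcal{R}_F(s)\ne\emptyset\}$; $\mathcal{C}_F(s)=\bigcup_{v\in\mathcal{R}_F(s)}c(v)$. For a relation $R\subseteq A\times B$ between sets of strings, $F'$ output simulates $F$ modulo $R$ if for every $s\in\mathcal{L}(F)$: (1) some $t\in\mathcal{L}(F')$ has $s\,R\,t$; (2) every $t\in B$ with $s\,R\,t$ satisfies $t\in\mathcal{L}(F')$ and $\mathcal{C}_F(s)\supseteq\mathcal{C}_{F'}(t)$. For a set $\Sigma$, $L\subseteq\Sigma^*$ and $N\subseteq\Sigma$: the $N$-shrink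 is the function $\pi_N:L\to(\Sigma\setminus N)^*$ deleting every occurrence of symbols of $N$ from a string (so $\pi_N(\epsilon)=\epsilon$). The $N$-pump is the relation $P_N\subseteq L\times\Sigma^*$ defined as the smallest relation such that $\epsilon\,P_N\,\epsilon$, $s\,P_N\,s$ for every $s\in L$, and whenever $s\,P_N\,t_1\cdots t_\ell$, then $s\,P_N\,t_1\cdots t_k\,b\,t_{k+1}\cdots t_\ell$ for every $b\in N$ and $k\in\{1,\dots,\ell\}$. *)

From mathcomp Require Import all_boot.
Set Implicit Arguments. Unset Strict Implicit. Unset Printing Implicit Defensive.

(* Observations are drawn from an ambient eqType O (Y(F) is a finite list of
   elements of O), outputs from an ambient type Cout (C is a subset of Cout). *)
Record device (O : eqType) (Cout : Type) := Device {
  st : finType;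
  init : {set st};
  obs : seq O;
  tau : st -> st -> pred O;
  outs : Cout -> Prop;
  outc : st -> Cout -> Prop;
  st_nonempty : 0 < #|st|;
  init_nonempty : init != set0;
  tau_sub : forall v w y, tau v w y -> y \in obs;
  outc_sub : forall v x, outc v x -> outs x;
  outc_nonempty : forall v, exists x, outc v x
}.

Section Dev.
Variables (O : eqType) (Cout : Type).

Fixpoint reaches (F : device O Cout) (v : st F) (s : seq O) (w : st F) : Prop :=
  match s with
  | [::] => v = w
  | y :: s' => exists u : st F, tau v u y /\ reaches u s' w
  end.

Definition reached (F : device O Cout) (s : seq O) (w : st F) : Prop :=
  exists2 v, v \in init F & reaches v s w.

Definition inL (F : device O Cout) (s : seq O) : Prop :=
  exists w : st F, reached s w.

Definition outputs (F : device O Cout) (s : seq O) (x : Cout) : Prop :=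
  exists2 w : st F, reached s w & outc w x.

Definition output_simulates (F' F : device O Cout) (R : seq O -> seq O -> Prop) : Prop :=
  forall s, inL F s ->
    (exists t, R s t /\ inL F' t) /\
    (forall t, R s t -> inL F' t /\ (forall x, outputs F' t x -> outputs F s x)).

Definition shrink (N : seq O) (s : seq O) : seq O := [seq y <- s | y \notin N].

Definition shrink_rel (L : seq O -> Prop) (N : seq O) (s t : seq O) : Prop :=
  L s /\ t = shrink N s.

Inductive pump (L : seq O -> Prop) (N : seq O) : seq O -> seq O -> Prop :=
  | pump_nil : pump L N [::] [::]
  | pump_refl s : L s -> pump L N s s
  | pump_ins s t1 t2 b :
      pump L N s (t1 ++ t2) -> b \in N -> 0 < size t1 ->
      pump L N s (t1 ++ b :: t2).

End Dev.

From mathcomp Require Import all_boot.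
From Stdlib Require Import Classical.
Set Implicit Arguments. Unset Strict Implicit. Unset Printing Implicit Defensive.

(* If G output simulates F modulo the shrink, letting G ignore the symbols of N (self-loops)
   gives a device simulating F modulo the pump, since every pump t of s has the shrink of s.
   Conversely, let F' simulate F modulo the pump.  Since no string of L(F) starts with a
   symbol of N, any finitely many strings of L(F) with the same shrink have a common
   "tail padding" t (N-symbols inserted after the first position) which pumps each of them;
   an output of F' at t is thus an output of F at each of these strings.  A subset
   construction on sets of states of F reads the shrink u and tracks the finitely many sets
   R_F(s) with shrink s = u; it outputs their common outputs, which are therefore nonempty. *)

Section Padding.
Variables (O : eqType) (N : seq O).

Inductive pad : seq O -> seq O -> Prop :=
  | pad_nil : pad [::] [::]
  | pad_cons a r c : pad r c -> pad (a :: r) (a :: c)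
  | pad_ins b r c : b \in N -> pad r c -> pad r (b :: c).

Lemma pad_refl s : pad s s.
Proof. by elim: s => [|a s IH]; [exact: pad_nil | exact: pad_cons]. Qed.

Lemma pad_trans b c : pad b c -> forall a, pad a b -> pad a c.
Proof.
elim=> {b c} [|x r c _ IH|y r c yN _ IH] a ab; last by apply: pad_ins => //; apply: IH.
  by inversion ab; exact: pad_nil.
by inversion ab; subst; [apply: pad_cons | apply: pad_ins] => //; apply: IH.
Qed.

Lemma shrink_pad r c : pad r c -> shrink N c = shrink N r.
Proof. by rewrite /shrink; elim=> {r c} //= [a r c _ -> | b r c -> _ ->]. Qed.

Lemma shrink_eq_nil w : (shrink N w == [::]) = all (mem N) w.
Proof.
rewrite /shrink -[_ == _]negbK -has_filter -all_predC.
by apply: eq_all => y /=; rewrite negbK.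
Qed.

Lemma pad_nil_shrink c : shrink N c = [::] -> pad [::] c.
Proof.
move/eqP; rewrite shrink_eq_nil; elim: c => [|b c IH] /=; first by move=> _; exact: pad_nil.
by case/andP=> bN cN; apply: pad_ins => //; apply: IH.
Qed.

Lemma pad_common a b : shrink N a = shrink N b -> exists2 c, pad a c & pad b c.
Proof.
rewrite /shrink; elim: a b => [|x a IH] b /=.
  by move/esym/pad_nil_shrink=> nb; exists b => //; exact: pad_refl.
case: ifP => [xN | /negbFE xN eq_ab]; last first.
  have [c ac bc] := IH b eq_ab.
  by exists (x :: c); [exact: pad_cons | exact: pad_ins].
elim: b => [|z b IHb] //=; case: ifP => [_ [<- eq_ab] | /negbFE zN eq_ab].
  by have [c ac bc] := IH b eq_ab; exists (x :: c); exact: pad_cons.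
have [c ac bc] := IHb eq_ab.
by exists (z :: c); [exact: pad_ins | exact: pad_cons].
Qed.

Lemma shrink_rcons_split s u y : y \notin N -> shrink N s = rcons u y ->
  exists s' w, [/\ s = s' ++ y :: w, shrink N s' = u & all (mem N) w].
Proof.
rewrite /shrink => yN; elim/last_ind: s => [|s z IH]; first by case: u.
rewrite filter_rcons; case: ifP => [zN | /negbFE zN].
  by move/eqP; rewrite eqseq_rcons => /andP [/eqP <- /eqP ->]; exists s, [::]; rewrite cats1.
case/IH=> s' [w [-> su wN]]; exists s', (rcons w z).
by rewrite rcons_cat all_rcons [mem N z]zN wN.
Qed.

Definition head_notin (s : seq O) : bool := if s is y :: _ then y \notin N else true.

Definition tail_pad (s t : seq O) : Prop :=
  match s, t with
  | [::], [::] => True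
  | y :: r, z :: c => y = z /\ pad r c
  | _, _ => False
  end.

Lemma tail_pad_refl s : tail_pad s s.
Proof. by case: s => //= y r; split => //; exact: pad_refl. Qed.

Lemma tail_pad_trans a b c : tail_pad a b -> tail_pad b c -> tail_pad a c.
Proof.
case: a b c => [|x a] [|y b] [|z c] //= [-> ab] [-> bc].
by split => //; exact: pad_trans bc _ ab.
Qed.

Lemma head_notin_tail_pad s t : tail_pad s t -> head_notin t = head_notin s.
Proof. by case: s t => [|x r] [|y c] //= [->]. Qed.

Lemma shrink_tail_pad s t : tail_pad s t -> shrink N t = shrink N s.
Proof.
case: s t => [|x r] [|y c] //= [<- rc].
by rewrite /shrink /= -!/(shrink N _) (shrink_pad rc).
Qed.

Lemma tail_pad_common s1 s2 : head_notin s1 -> head_notin s2 ->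
  shrink N s1 = shrink N s2 -> exists2 t, tail_pad s1 t & tail_pad s2 t.
Proof.
case: s1 s2 => [|x1 r1] [|x2 r2] //=; rewrite /shrink /=.
- by move=> _ _ _; exists [::].
- by move=> _ ->.
- by move=> ->.
move=> -> -> [<-]; rewrite -!/(shrink N _) => /pad_common [c r1c r2c].
by exists (x1 :: c).
Qed.

Lemma tail_pad_common_seq (A : eqType) (R : A -> seq O -> Prop) (l : seq A) s0 :
    head_notin s0 ->
    (forall a, a \in l -> exists2 s, R a s & head_notin s /\ shrink N s = shrink N s0) ->
  exists2 t, tail_pad s0 t & forall a, a \in l -> exists2 s, R a s & tail_pad s t.
Proof.
move=> s0N; elim: l => [|a l IH] reps; first by exists s0 => //; exact: tail_pad_refl.
have [t s0t lt] := IH (fun b bl => reps b (mem_behead (s := a :: l) bl)).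
have [s Ras [sN ss0]] := reps a (mem_head a l).
have tN : head_notin t by rewrite (head_notin_tail_pad s0t).
have [t' tt' st'] := tail_pad_common tN sN (etrans (shrink_tail_pad s0t) (esym ss0)).
exists t'; first exact: tail_pad_trans s0t tt'.
move=> b; rewrite inE => /predU1P [-> | bl]; first by exists s.
by have [s' Rbs' s't] := lt b bl; exists s' => //; exact: tail_pad_trans s't tt'.
Qed.

Variable L : seq O -> Prop.

Lemma pump_pad s y p r c :
  pad r c -> pump L N s (y :: p ++ r) -> pump L N s (y :: p ++ c).
Proof.
move=> rc; elim: rc p => {r c} [//|a r c _ IH|b r c bN _ IH] p sp.
  by rewrite -cat_rcons; apply: IH; rewrite cat_rcons.
exact: (pump_ins (t1 := y :: p) (IH p sp) bN).
Qed.

Lemma pump_tail_pad s t : L s -> tail_pad s t -> pump L N s t.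
Proof.
case: s t => [|x r] [|y c] //= Ls; first by move=> _; exact: pump_nil.
by case=> <- rc; apply: (pump_pad (p := [::]) rc); exact: pump_refl.
Qed.

Lemma shrink_pump s t : pump L N s t -> shrink N t = shrink N s.
Proof.
rewrite /shrink; elim=> {s t} [//|//|s t1 t2 b _ IH bN _].
by rewrite filter_cat /= bN -IH filter_cat.
Qed.

End Padding.

Section ReachedSets.
Variables (O : eqType) (Cout : Type) (F : device O Cout) (N : seq O).

Lemma reaches_obs (v : st F) s w : reaches v s w -> all (mem (obs F)) s.
Proof. by elim: s v => [|y s IH] v //= [u [vu uw]]; rewrite (tau_sub vu) (IH _ uw). Qed.

Definition post (y : O) (S : {set st F}) : {set st F} := [set w | [exists v in S, tau v w y]].

Definition reach_set (s : seq O) (S : {set st F}) : {set st F} :=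
  foldl (fun S y => post y S) S s.

Lemma reach_setP s (S : {set st F}) w :
  w \in reach_set s S <-> exists2 v, v \in S & reaches v s w.
Proof.
elim: s S => [|y s IH] S /=; first by split=> [Sw | [v Sv <-]]; first exists w.
rewrite IH; split=> [[u] | [v Sv [u [vu uw]]]].
  by rewrite inE => /exists_inP [v Sv vu] uw; exists v => //; exists u.
by exists u => //; rewrite inE; apply/exists_inP; exists v.
Qed.

Lemma reach_set_cat s1 s2 (S : {set st F}) :
  reach_set (s1 ++ s2) S = reach_set s2 (reach_set s1 S).
Proof. exact: foldl_cat. Qed.

Lemma reach_set0 s : reach_set s set0 = set0.
Proof. by apply/setP => w; rewrite inE; apply/negP => /reach_setP [v]; rewrite inE. Qed.

Lemma inL_reach_set s : inL F s <-> reach_set s (init F) != set0.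
Proof.
split=> [[w sw] | /set0Pn [w /reach_setP sw]]; last by exists w.
by apply/set0Pn; exists w; apply/reach_setP.
Qed.

Definition post_in_N : rel {set st F} := fun S T => has (fun y => T == post y S) N.

Definition N_closure (S : {set st F}) : {set {set st F}} := [set T | connect post_in_N S T].

Lemma N_closureP (S T : {set st F}) :
  T \in N_closure S <-> exists2 w, all (mem N) w & T = reach_set w S.
Proof.
rewrite inE; split=> [/connectP [p] | [w]].
  elim: p S => [|S' p IH] S /=; first by move=> _ ->; exists [::].
  case/andP=> /hasP [y yN /eqP ->] /IH {}IH /IH [w wN ->].
  by exists (y :: w); rewrite /= ?yN.
elim: w S => [|y w IH] S /=; first by move=> _ ->; exact: connect0.
case/andP=> yN wN /(IH _ wN); apply: connect_trans; apply: connect1.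
by apply/hasP; exists y.
Qed.

(* The N-symbols erased by the shrink are re-inserted by [N_closure]. *)
Definition class_step (X : {set {set st F}}) (y : O) : {set {set st F}} :=
  [set T | [exists S in X, (T \in N_closure (post y S)) && (T != set0)]].

Definition class_init : {set {set st F}} := [set T in N_closure (init F) | T != set0].

Definition shrink_class (u : seq O) : {set {set st F}} := foldl class_step class_init u.

Lemma shrink_classP u (T : {set st F}) : all (fun y => y \notin N) u ->
  T \in shrink_class u <-> T != set0 /\ exists2 s, shrink N s = u & T = reach_set s (init F).
Proof.
elim/last_ind: u T => [|u y IH] T.
  move=> _; rewrite /shrink_class /= inE andbC; split.
    case/andP=> -> /N_closureP [w wN ->]; split=> //.
    by exists w => //; apply/eqP; rewrite shrink_eq_nil.
  case=> -> [s /eqP]; rewrite shrink_eq_nil => sN ->.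
  by apply/N_closureP; exists s.
rewrite all_rcons => /andP [yN uN].
rewrite /shrink_class -cats1 foldl_cat -/(shrink_class u) /= inE; split.
  case/exists_inP=> S /(IH _ uN) [_ [s su ->]] /andP [/N_closureP [w wN ->] Tn].
  split=> //; exists (s ++ y :: w); last by rewrite reach_set_cat.
  move: wN; rewrite -shrink_eq_nil => /eqP wN.
  by rewrite /shrink filter_cat /= yN -!/(shrink N _) su wN.
case=> Tn [s]; rewrite cats1 => /(shrink_rcons_split yN) [s' [w [-> s'u wN]]] T_def.
subst T; rewrite reach_set_cat in Tn *.
apply/exists_inP; exists (reach_set s' (init F)).
  apply/(IH _ uN); split; last by exists s'.
  by apply: contraNneq Tn => ->; rewrite reach_set0.
by rewrite Tn andbT; apply/N_closureP; exists w.
Qed.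

End ReachedSets.

Section ShrinkDevice.
Variables (O : eqType) (Cout : Type) (F : device O Cout) (N : seq O).

Definition common_out (X : {set {set st F}}) (x : Cout) : Prop :=
  forall S, S \in X -> exists2 v, v \in S & outc v x.

(* A state without a common output may output anything; such states are never reached
   from a string of L(F) when some device output simulates F modulo the pump. *)
Definition det_out (X : {set {set st F}}) (x : Cout) : Prop :=
  (exists x', common_out X x') -> common_out X x.

Lemma det_out_nonempty X : exists x, det_out X x.
Proof.
have [[x' Xx'] | no_common] := classic (exists x', common_out X x'); first by exists x'.
have /set0Pn [v _] := init_nonempty F.
by have [x _] := outc_nonempty v; exists x => /no_common.
Qed.

Lemma card_sets_gt0 : 0 < #|{set {set st F}}|.
Proof. by apply/card_gt0P; exists set0. Qed.

Lemma set1_class_init_neq0 : [set class_init F N] != set0.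
Proof. by apply/set0Pn; exists (class_init F N); rewrite inE. Qed.

Definition det_tau (X Y : {set {set st F}}) : pred O :=
  fun y => (y \in obs F) && (Y == class_step N X y).

Lemma det_tau_sub X Y y : det_tau X Y y -> y \in obs F.
Proof. by case/andP. Qed.

Definition shrink_det : device O Cout :=
  Device (init := [set class_init F N]) card_sets_gt0 set1_class_init_neq0 det_tau_sub
    (outs := fun _ => True) (fun _ _ _ => I) det_out_nonempty.

Lemma shrink_det_reached u (Y : st shrink_det) :
  reached u Y <-> all (mem (obs F)) u /\ Y = shrink_class F N u.
Proof.
have reachesE (X : st shrink_det) :
    reaches X u Y <-> all (mem (obs F)) u /\ Y = foldl (class_step N) X u.
  elim: u X => [|y u IH] X /=; first by split=> [-> | [_ ->]].
  split=> [[Z [/andP [yF /eqP ->]]] | [/andP [yF uF] YE]].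
    by case/IH=> uF ->; rewrite yF uF.
  by exists (class_step N X y); split; [rewrite /det_tau yF /= | apply/IH].
split=> [[X] | /reachesE]; first by rewrite inE => /eqP -> /reachesE.
by exists (class_init F N); rewrite ?inE.
Qed.

End ShrinkDevice.

Section SkipDevice.
Variables (O : eqType) (Cout : Type) (G : device O Cout) (N : seq O).

Definition skip_tau (v w : st G) : pred O :=
  fun y => if y \in N then v == w else tau v w y.

Lemma skip_tau_sub v w y : skip_tau v w y -> y \in obs G ++ N.
Proof. by rewrite /skip_tau mem_cat; case: ifP => [_ _ | _ /tau_sub ->]; rewrite ?orbT. Qed.

Definition skipN : device O Cout :=
  Device (init := init G) (st_nonempty G) (init_nonempty G) skip_tau_sub
    (@outc_sub _ _ G) (@outc_nonempty _ _ G).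

Lemma skipN_reaches (v w : st G) t : @reaches _ _ skipN v t w <-> reaches v (shrink N t) w.
Proof.
elim: t v => [|y t IH] v //=.
rewrite /shrink /= /skip_tau -/(shrink N t); case: (y \in N) => /=.
  by split=> [[u [/eqP <- /IH]] // | /IH vw]; exists v.
by split=> [[u [vu /IH uw]] | [u [vu /IH uw]]]; exists u.
Qed.

Lemma skipN_outputs t x : outputs skipN t x <-> outputs G (shrink N t) x.
Proof.
by split=> [[w [v iv /skipN_reaches vw] wx] | [w [v iv /skipN_reaches vw] wx]];
  exists w => //; exists v.
Qed.

Lemma skipN_inL t : inL skipN t <-> inL G (shrink N t).
Proof.
by split=> [[w [v iv /skipN_reaches vw]] | [w [v iv /skipN_reaches vw]]]; exists w; exists v.
Qed.

End SkipDevice.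

Section Simulation.
Variables (O : eqType) (Cout : Type) (F : device O Cout) (N : seq O).

Lemma skipN_simulates_pump G :
  output_simulates G F (shrink_rel (inL F) N) ->
  output_simulates (skipN G N) F (pump (inL F) N).
Proof.
move=> simG s sF; have [Gs Gout] := (simG s sF).2 (shrink N s) (conj sF erefl).
split=> [|t /shrink_pump ts]; first by exists s; split; [exact: pump_refl | apply/skipN_inL].
split=> [|x /skipN_outputs]; first by apply/skipN_inL; rewrite ts.
by rewrite ts; apply: Gout.
Qed.

Hypothesis head_notinF : forall y s, inL F (y :: s) -> y \notin N.

Lemma shrink_class_common_out F' s :
    output_simulates F' F (pump (inL F) N) -> inL F s ->
  exists x, common_out (shrink_class F N (shrink N s)) x.
Proof.
move=> simF' sF.
have headN s' : inL F s' -> head_notin N s' by case: s' => // y r /head_notinF.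
have class_reps T : T \in enum (shrink_class F N (shrink N s)) ->
    exists2 s', inL F s' /\ T = reach_set s' (init F)
              & head_notin N s' /\ shrink N s' = shrink N s.
  rewrite mem_enum => /(shrink_classP _ (filter_all _ s)) [Tn [s' s's T_def]].
  have s'F : inL F s' by apply/inL_reach_set; rewrite -T_def.
  by exists s' => //; split=> //; exact: headN.
have [t st reps] := tail_pad_common_seq (headN s sF) class_reps.
have [[w [v iv vw]] _] := (simF' s sF).2 t (pump_tail_pad sF st).
have [x wx] := outc_nonempty w.
exists x => S; rewrite -mem_enum => /reps [s' [s'F ->] s't].
have [_ /(_ x) F's'] := (simF' s' s'F).2 t (pump_tail_pad s'F s't).
have [u /reach_setP ? ?] : outputs F s' x by apply: F's'; exists w => //; exists v.
by exists u.
Qed.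

Lemma shrink_det_simulates_shrink F' :
  output_simulates F' F (pump (inL F) N) ->
  output_simulates (shrink_det F N) F (shrink_rel (inL F) N).
Proof.
move=> simF' s sF.
have sF_obs : all (mem (obs F)) (shrink N s).
  case: sF => w [v _ /reaches_obs]; rewrite /shrink all_filter.
  by apply: sub_all => y /= ->; rewrite implybT.
have s_class : reach_set s (init F) \in shrink_class F N (shrink N s).
  by apply/(shrink_classP _ (filter_all _ _)); split; [apply/inL_reach_set | exists s].
have det_s : inL (shrink_det F N) (shrink N s).
  by exists (shrink_class F N (shrink N s)); apply/shrink_det_reached.
split=> [|_ [_ ->]]; first by exists (shrink N s).
split=> // x [Y /shrink_det_reached [_ ->] Yx].
have [v sv vx] := Yx (shrink_class_common_out simF' sF) _ s_class.
by exists v => //; apply/reach_setP.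
Qed.

End Simulation.

Theorem theorem3 (O : eqType) (Cout : Type) (F : device O Cout) (N : seq O) :
  {subset N <= obs F} ->
  (forall (y : O) (s : seq O), inL F (y :: s) -> y \in obs F /\ y \notin N) ->
  (exists F' : device O Cout, output_simulates F' F (pump (inL F) N)) <->
  (exists F' : device O Cout, output_simulates F' F (shrink_rel (inL F) N)).
Proof.
move=> _ headF.
split=> [[F' simF'] | [G simG]].
  by exists (shrink_det F N); apply: shrink_det_simulates_shrink simF' => y s /headF [].
by exists (skipN G N); exact: skipN_simulates_pump.
Qed.
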